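(* Suppose that \[ \mathcal M = \left\{ M \geq 0 : \begin{pmatrix} A - M & B^* \\ B & M \end{pmatrix} \geq 0\right\} \] is non-empty with maximal element $M_+$, minimal element $M_-$, and $M_* = \tfrac{1}{2}(M_+ + M_-)$. Let $A-M_\pm = E_\pm^*E_\pm$ and $A-M_* = E_*^*E_*$, $M_\pm = F_\pm^*F_\pm$ and $M_* = F_*^*F_*$, and $B = F_\pm^*G_\pm E_\pm = F_*^*G_* E_*$, where $G_\pm : \overline{\mathrm{ran}}\, E_\pm \to \overline{\mathrm{ran}}\, F_\pm$ and $G_*: \overline{\mathrm{ran}}\, E_* \to \overline{\mathrm{ran}}\, F_*$ are contractions. The set $\mathcal M$ is a singleton if and only if the operators $G_+$, $G_-$ and $G_*$ are unitary.
   Context: $A$ and $B$ are bounded linear operators on a Hilbert space, with $A$ selfadjoint; $\begin{pmatrix} A - M & B^* \\ B & M \end{pmatrix}$ is viewed as an operator on the direct sum of two copies of that space, and $\mathcal M$ is the set of positive operators $M$ making it positive. When non-empty, $\mathcal M$ is norm closed and convex and has a maximal element $M_+$ and a minimal element $M_-$. Here $\overline{\mathrm{ran}}\, X$ denotes the closure of the range of the operator $X$. *)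

From HB Require Import structures.
From mathcomp Require Import all_boot all_order all_algebra.
From mathcomp Require Import complex.
From mathcomp Require Import reals.
Set Implicit Arguments. Unset Strict Implicit. Unset Printing Implicit Defensive.
Import Order.TTheory GRing.Theory Num.Theory ComplexField.
Local Open Scope ring_scope.

Section Hilbert.
Variable R : realType.
Local Notation C := (R[i]).

Definition is_inner_product (V : lmodType C) (ip : V -> V -> C) : Prop :=
  [/\ forall (a : C) (x y z : V), ip (a *: x + y) z = a * ip x z + ip y z,
      forall x y : V, ip y x = (ip x y)^*,
      forall x : V, 0 <= ip x x
    & forall x : V, ip x x = 0 -> x = 0].

Definition ip_norm (V : lmodType C) (ip : V -> V -> C) (x : V) : R :=
  Num.sqrt (complex.Re (ip x x)).

Definition ip_complete (V : lmodType C) (ip : V -> V -> C) : Prop :=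
  forall u : nat -> V,
    (forall e : R, 0 < e -> exists N : nat, forall m n : nat,
        (N <= m)%N -> (N <= n)%N -> ip_norm ip (u m - u n) < e) ->
    exists l : V, forall e : R, 0 < e -> exists N : nat, forall n : nat,
        (N <= n)%N -> ip_norm ip (u n - l) < e.

End Hilbert.

Record hspace (R : realType) := HSpace {
  hs_car :> lmodType (R[i]);
  hs_ip : hs_car -> hs_car -> R[i];
  hs_inner : is_inner_product hs_ip;
  hs_complete : ip_complete hs_ip }.

Section Operators.
Variable R : realType.
Local Notation C := (R[i]).

Definition hnorm (H : hspace R) (x : H) : R := ip_norm (@hs_ip R H) x.
Definition inner (H : hspace R) (x y : H) : C := @hs_ip R H x y.

Definition bounded_linear (H K : hspace R) (T : H -> K) : Prop :=
  (forall (a : C) (x y : H), T (a *: x + y) = a *: T x + T y) /\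
  exists c : R, forall x : H, hnorm (T x) <= c * hnorm x.

Definition is_adjoint (H K : hspace R) (T : H -> K) (S : K -> H) : Prop :=
  forall (x : H) (y : K), inner (T x) y = inner x (S y).

Definition selfadjoint (H : hspace R) (T : H -> H) : Prop := is_adjoint T T.

(* Positive operator: bounded linear with <Tx,x> >= 0 (in C, i.e. real and
   nonnegative) for all x. *)
Definition positive_op (H : hspace R) (T : H -> H) : Prop :=
  bounded_linear T /\ forall x : H, 0 <= inner (T x) x.

Definition op_le (H : hspace R) (T1 T2 : H -> H) : Prop :=
  positive_op (fun x => T2 x - T1 x).

(* Positivity of the block operator [[A - M, Bs]; [B, M]] on H (+) H,
   where Bs = B^*: <(A-M)x + Bs y, x> + <B x + M y, y> >= 0. *)
Definition block_positive (H : hspace R) (A B Bs M : H -> H) : Prop :=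
  forall x y : H, 0 <= inner (A x - M x + Bs y) x + inner (B x + M y) y.

Definition calM (H : hspace R) (A B Bs : H -> H) (M : H -> H) : Prop :=
  positive_op M /\ block_positive A B Bs M.

Definition factors_as (H K : hspace R) (T : H -> H) (E : H -> K) : Prop :=
  bounded_linear E /\
  exists Es : K -> H, is_adjoint E Es /\ forall x : H, T x = Es (E x).

Definition cl_ran (H K : hspace R) (E : H -> K) (y : K) : Prop :=
  forall e : R, 0 < e -> exists x : H, hnorm (y - E x) < e.

Definition contraction_between (H K1 K2 : hspace R)
    (E : H -> K1) (F : H -> K2) (G : K1 -> K2) : Prop :=
  [/\ forall (a : C) (u v : K1), cl_ran E u -> cl_ran E v ->
        G (a *: u + v) = a *: G u + G v,
      forall u : K1, cl_ran E u -> cl_ran F (G u)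
    & forall u : K1, cl_ran E u -> hnorm (G u) <= hnorm u].

Definition unitary_between (H K1 K2 : hspace R)
    (E : H -> K1) (F : H -> K2) (G : K1 -> K2) : Prop :=
  [/\ forall (a : C) (u v : K1), cl_ran E u -> cl_ran E v ->
        G (a *: u + v) = a *: G u + G v,
      forall u : K1, cl_ran E u -> cl_ran F (G u),
      forall u : K1, cl_ran E u -> hnorm (G u) = hnorm u
    & forall w : K2, cl_ran F w -> exists2 u : K1, cl_ran E u & G u = w].

Definition block_factor (H K1 K2 : hspace R) (B : H -> H)
    (E : H -> K1) (F : H -> K2) (G : K1 -> K2) : Prop :=
  contraction_between E F G /\
  exists Fs : K2 -> H, is_adjoint F Fs /\ forall x : H, B x = Fs (G (E x)).

End Operators.

(* Write P_M(x, y) for the quadratic form of the block operator with corner M.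
   Whenever A - M = E^*E, M = F^*F and B = F^*GE with G a contraction,
   P_M(x, y) = |GEx + Fy|^2 + (|Ex|^2 - |GEx|^2).

   If G_* is unitary, then for each y some x makes P_{M_*}(x, y) as small as
   we like.  Since P_{M_*} is the mean of P_{M_+} and P_{M_-}, both of which
   dominate |G_±E_±x + F_±y|^2, the same x makes
   <(M_+ - M_-)y, w> = <G_+E_+x + F_+y, F_+w> - <G_-E_-x + F_-y, F_-w>
   small, so M_+ = M_-, and every element of calM, squeezed between them,
   equals M_+.

   Conversely, if calM = {M_0}, every perturbation M_0 - D that keeps both
   positivity conditions has D = 0.  For D = E^*G^*GE - E^*E this says that G
   is isometric on ran E, hence on its closure.  For the rank-one
   D = <F., w> F^*w / |w|^2, with w in the closure of ran F orthogonal to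
   G(ran E), it gives F^*w = 0, hence w = 0; projecting onto the closed range
   G(cl ran E) then shows that G is onto. *)

From HB Require Import structures.
From mathcomp Require Import all_boot all_order all_algebra.
From mathcomp Require Import complex reals.
From mathcomp Require Import ring lra.
Import Order.TTheory GRing.Theory Num.Theory ComplexField Normc.
Local Open Scope ring_scope.
Set Implicit Arguments. Unset Strict Implicit. Unset Printing Implicit Defensive.

Local Notation "x %:C" := (real_complex _ x) (at level 1, format "x %:C").

Section Modulus.
Variable R : realType.
Implicit Types (z : R[i]) (r : R).

Lemma normcE z : `|z| = (normc z)%:C.
Proof. by case: z => a b; rewrite normc_def. Qed.

Lemma normc_ge0 z : 0 <= normc z.
Proof. by case: z => a b; apply: sqrtr_ge0. Qed.

Lemma normc_real r : normc r%:C = `|r|.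
Proof. by rewrite /normc /= expr0n addr0 sqrtr_sqr. Qed.

Lemma sqr_normcE z : (normc z ^+ 2)%:C = z * z^*.
Proof. by rewrite -normCK normcE rmorphXn. Qed.

Lemma Re_le_normc z : complex.Re z <= normc z.
Proof.
case: z => a b; apply: le_trans (ler_norm a) _.
by rewrite /normc /= -sqrtr_sqr ler_sqrt ?lerDl ?addr_ge0 ?sqr_ge0.
Qed.

Lemma conj_realC r : r%:C^* = r%:C.
Proof. by apply/eqP; rewrite eq_complex /= oppr0 !eqxx. Qed.

Lemma Re_addJ z : (2 * complex.Re z)%:C = z + z^*.
Proof.
by case: z => a b; apply/eqP; rewrite eq_complex /= mulr2n mulrDl mul1r subrr !eqxx.
Qed.

Lemma eq0_normc_le z (k : R) : (forall e, 0 < e -> normc z <= e * k) -> z = 0.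
Proof.
move=> small; apply: eq0_normc; apply/eqP; rewrite eq_le normc_ge0 andbT.
apply/ler_addgt0Pr => e e0; rewrite add0r.
have k1 : 0 < `|k| + 1 by rewrite ltr_wpDl.
have := small (e / (`|k| + 1)) (divr_gt0 e0 k1).
have : e / (`|k| + 1) * (`|k| + 1) = e by rewrite divfK ?gt_eqF.
have := ler_norm k; have : 0 < e / (`|k| + 1) by exact: divr_gt0.
move: (e / _) => d; nra.
Qed.

End Modulus.

Lemma eventually_inv_lt (R : realType) (e : R) : 0 < e ->
  exists N, forall n, (N <= n)%N -> n.+1%:R^-1 < e.
Proof.
move=> e0; have /archi_boundP : 0 <= e^-1 by rewrite invr_ge0 ltW.
set N := Num.Def.archi_bound _ => hN; exists N => n Nn.
rewrite -[e]invrK ltf_pV2 ?posrE ?invr_gt0 ?ltr0n //.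
by apply: (lt_le_trans hN); rewrite ler_nat ltnS ltnW.
Qed.

Section InnerProduct.
Variables (R : realType) (H : hspace R).
Implicit Types (x y z : H) (a : R[i]).

Lemma inner_scalar z : scalar (fun x : H => inner x z).
Proof. by move=> a x y; case: (hs_inner H) => + _ _ _; apply. Qed.

Lemma innerC x y : inner x y = (inner y x)^*.
Proof. by case: (hs_inner H) => _ + _ _; apply. Qed.

Lemma inner_ge0 x : 0 <= inner x x.
Proof. by case: (hs_inner H) => _ _ + _; apply. Qed.

Lemma inner_eq0 x : inner x x = 0 -> x = 0.
Proof. by case: (hs_inner H) => _ _ _; apply. Qed.

Lemma innerB x y z : inner (x - y) z = inner x z - inner y z.
Proof. exact: (zmod_morphism_linear (inner_scalar z) x y). Qed.

Lemma innerZ a x z : inner (a *: x) z = a * inner x z.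
Proof. exact: (scalable_linear (inner_scalar z) a x). Qed.

Lemma inner0 z : inner 0 z = 0.
Proof. by rewrite -(subrr z) innerB subrr. Qed.

Lemma innerN x z : inner (- x) z = - inner x z.
Proof. by rewrite -sub0r innerB inner0 sub0r. Qed.

Lemma innerD x y z : inner (x + y) z = inner x z + inner y z.
Proof. by rewrite -{1}[y]opprK innerB innerN opprK. Qed.

Lemma innerBr x y z : inner z (x - y) = inner z x - inner z y.
Proof. by rewrite !(innerC z) innerB rmorphB. Qed.

Lemma innerZr a x z : inner z (a *: x) = a^* * inner z x.
Proof. by rewrite !(innerC z) innerZ rmorphM. Qed.

Lemma inner0r z : inner z 0 = 0.
Proof. by rewrite innerC inner0 rmorph0. Qed.

Lemma innerNr x z : inner z (- x) = - inner z x.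
Proof. by rewrite !(innerC z) innerN rmorphN. Qed.

Lemma innerDr x y z : inner z (x + y) = inner z x + inner z y.
Proof. by rewrite !(innerC z) innerD rmorphD. Qed.

Lemma inner_ext x y : (forall z, inner x z = inner y z) -> x = y.
Proof. by move=> h; apply/subr0_eq/inner_eq0; rewrite innerB h subrr. Qed.

Lemma hnorm_ge0 x : 0 <= hnorm x.
Proof. exact: sqrtr_ge0. Qed.

Lemma innerxx x : inner x x = (hnorm x ^+ 2)%:C.
Proof.
have /ger0_real/RRe_real xx := inner_ge0 x.
by rewrite /hnorm /ip_norm sqr_sqrtr -?ler0c xx // inner_ge0.
Qed.

Lemma hnorm_eq0 x : hnorm x = 0 -> x = 0.
Proof. by move=> h; apply: inner_eq0; rewrite innerxx h expr0n. Qed.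

Lemma hnorm0 : hnorm (0 : H) = 0.
Proof. by rewrite /hnorm /ip_norm -/(inner _ _) inner0 sqrtr0. Qed.

Lemma hnormN x : hnorm (- x) = hnorm x.
Proof. by rewrite /hnorm /ip_norm -!/(inner _ _) innerN innerNr opprK. Qed.

Lemma hnorm_distC x y : hnorm (x - y) = hnorm (y - x).
Proof. by rewrite -hnormN opprB. Qed.

Lemma sqr_hnormD x y :
  hnorm (x + y) ^+ 2 = hnorm x ^+ 2 + hnorm y ^+ 2 + 2 * complex.Re (inner x y).
Proof.
apply: complexI; rewrite !rmorphD /= Re_addJ -!innerxx innerD !innerDr -innerC.
ring.
Qed.

Lemma cauchy_schwarz x y : normc (inner x y) <= hnorm x * hnorm y.
Proof.
have [->|y0] := eqVneq y 0; first by rewrite inner0r normc0 hnorm0 mulr0.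
have q0 : 0 < hnorm y ^+ 2.
  by rewrite exprn_gt0 // lt_def hnorm_ge0 andbT; apply: contra_neq y0 => /hnorm_eq0.
set p := inner x y; set q := hnorm y ^+ 2.
have qC0 : q%:C != 0 by apply/eqP => -[/eqP]; rewrite gt_eqF.
have tJ : (p / q%:C)^* = p^* / q%:C by rewrite rmorphM fmorphV /= conj_realC.
have := inner_ge0 (x - (p / q%:C) *: y).
rewrite innerB !innerBr !innerZ !innerZr (innerC y x) -/p !innerxx -/q tJ.
have -> : forall a, a - p^* / q%:C * p - (p / q%:C * p^* - p / q%:C * (p^* / q%:C * q%:C))
    = a - p * p^* / q%:C by move=> a; field.
rewrite -sqr_normcE -fmorphV -rmorphM -rmorphB ler0c subr_ge0 ler_pdivrMr //.
by rewrite -exprMn ler_sqr ?nnegrE ?normc_ge0 ?mulr_ge0 ?hnorm_ge0.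
Qed.

Lemma ler_hnormD x y : hnorm (x + y) <= hnorm x + hnorm y.
Proof.
rewrite -ler_sqr ?nnegrE ?addr_ge0 ?hnorm_ge0 // sqr_hnormD sqrrD.
have := le_trans (Re_le_normc (inner x y)) (cauchy_schwarz x y); lra.
Qed.

Lemma ler_hnormB x y : hnorm (x - y) <= hnorm x + hnorm y.
Proof. by rewrite -(hnormN y) ler_hnormD. Qed.

Lemma hnormZ a x : hnorm (a *: x) = normc a * hnorm x.
Proof.
apply/eqP; rewrite -(eqrXn2 (_ : 0 < 2)%N) ?mulr_ge0 ?normc_ge0 ?hnorm_ge0 //.
apply/eqP/complexI; rewrite -innerxx innerZ innerZr mulrA exprMn rmorphM /=.
by rewrite sqr_normcE innerxx.
Qed.

Lemma hnorm_parallelogram x y :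
  hnorm (x + y) ^+ 2 + hnorm (x - y) ^+ 2 = 2 * hnorm x ^+ 2 + 2 * hnorm y ^+ 2.
Proof. by rewrite !sqr_hnormD hnormN innerNr; case: (inner x y) => r i /=; ring. Qed.
End InnerProduct.

Section Sequences.
Variables (R : realType) (H : hspace R).
Implicit Types (u : nat -> H) (l : H).

Definition cauchy_seq u := forall e : R, 0 < e ->
  exists N, forall m n, (N <= m)%N -> (N <= n)%N -> hnorm (u m - u n) < e.

Definition converges_to u l := forall e : R, 0 < e ->
  exists N, forall n, (N <= n)%N -> hnorm (u n - l) < e.

Lemma cauchy_seq_converges u : cauchy_seq u -> exists l, converges_to u l.
Proof. exact: hs_complete. Qed.

Lemma converges_to_cauchy u l : converges_to u l -> cauchy_seq u.
Proof.
move=> ul e e0; have [N hN] := ul _ (divr_gt0 e0 (ltr0n _ 2)).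
exists N => m n Nm Nn; have -> : u m - u n = (u m - l) - (u n - l).
  by rewrite opprB addrA subrK.
have := ler_hnormB (u m - l) (u n - l); have := hN m Nm; have := hN n Nn; lra.
Qed.

End Sequences.

Lemma inner_limit (R : realType) (H H' : hspace R) (u : nat -> H) (u' : nat -> H')
    l l' (w : H) (w' : H') :
  converges_to u l -> converges_to u' l' ->
  (forall n, inner (u n) w = inner (u' n) w') -> inner l w = inner l' w'.
Proof.
move=> ul ul' uu'; apply/subr0_eq/(eq0_normc_le (k := hnorm w + hnorm w')) => e e0.
have [N hN] := ul e e0; have [N' hN'] := ul' e e0.
have {}hN := hN _ (leq_maxl N N'); have {}hN' := hN' _ (leq_maxr N N').
have -> : inner l w - inner l' w' =
    inner (u' (maxn N N') - l') w' - inner (u (maxn N N') - l) w.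
  by rewrite !innerB uu'; ring.
apply: le_trans (le_normcD _ _) _; rewrite normcN.
have := cauchy_schwarz (u' (maxn N N') - l') w'.
have := cauchy_schwarz (u (maxn N N') - l) w.
have := hnorm_ge0 w; have := hnorm_ge0 w'; nra.
Qed.

Section Operators.
Variables (R : realType) (H K : hspace R).

Lemma bounded_linear_bound (T : H -> K) : bounded_linear T ->
  exists2 c, 0 <= c & forall x, hnorm (T x) <= c * hnorm x.
Proof.
case=> _ [c Tc]; exists (Num.max c 0) => [|x]; first by rewrite le_max lexx orbT.
by apply: le_trans (Tc x) _; rewrite ler_wpM2r ?hnorm_ge0 ?le_max ?lexx.
Qed.

Lemma adjointC (T : H -> K) S : is_adjoint T S -> forall y x, inner (S y) x = inner y (T x).
Proof. by move=> TS y x; rewrite innerC -TS -innerC. Qed.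

Lemma cl_ran_im (E : H -> K) x : cl_ran E (E x).
Proof. by move=> e e0; exists x; rewrite subrr hnorm0. Qed.

Lemma cl_ranB (E : H -> K) u v : linear E -> cl_ran E u -> cl_ran E v -> cl_ran E (u - v).
Proof.
move=> linE hu hv e e0; have e2 := divr_gt0 e0 (ltr0n _ 2).
have [x hx] := hu _ e2; have [y hy] := hv _ e2.
exists (x - y); rewrite (zmod_morphism_linear linE).
have -> : u - v - (E x - E y) = (u - E x) - (v - E y).
  by rewrite !opprB addrACA [RHS]addrACA [- E x + _]addrC.
by have := ler_hnormB (u - E x) (v - E y); lra.
Qed.

Lemma cl_ran_seq (E : H -> K) v : cl_ran E v -> exists xs, converges_to (E \o xs) v.
Proof.
move=> hv; have /boolp.choice [xs hxs] : forall n : nat, exists x, hnorm (v - E x) < n.+1%:R^-1.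
  by move=> n; apply: hv; rewrite invr_gt0 ltr0n.
exists xs => e e0; have [N hN] := eventually_inv_lt e0.
by exists N => n Nn; rewrite hnorm_distC; apply: lt_trans (hxs n) (hN n Nn).
Qed.

Lemma converges_to_cl_ran (E : H -> K) xs v : converges_to (E \o xs) v -> cl_ran E v.
Proof. by move=> h e /h [N hN]; exists (xs N); rewrite hnorm_distC; apply: hN. Qed.

Lemma cl_ran_orthogonal (E : H -> K) w :
  cl_ran E w -> (forall x, inner (E x) w = 0) -> w = 0.
Proof.
move=> hw Ew; apply/inner_eq0/(eq0_normc_le (k := hnorm w)) => e /hw [x hx].
have -> : inner w w = inner (w - E x) w by rewrite innerB Ew subr0.
by apply: le_trans (cauchy_schwarz _ _) _; rewrite ler_wpM2r ?hnorm_ge0 ?ltW.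
Qed.

End Operators.

#[local] Hint Resolve cl_ran_im : core.

Section Polarization.
Variables (R : realType) (H : hspace R) (P : H -> H).
Hypothesis linP : linear P.

Lemma quadratic_form_eq0 : (forall x, inner (P x) x = 0) -> forall x, P x = 0.
Proof.
move=> P0 x; apply: inner_eq0.
have sum0 w : inner (P x) w + inner (P w) x = 0.
  have := P0 (x + w); rewrite (GRing.semilinear_linear linP).2 !innerD !innerDr !P0.
  by rewrite add0r addr0.
have := sum0 ('i *: P x); rewrite (scalable_linear linP) innerZr innerZ conjCi => sumi.
have : 'i * (inner (P x) (P x) + inner (P (P x)) x) -
    (- 'i * inner (P x) (P x) + 'i * inner (P (P x)) x) = 0.
  by rewrite sum0 sumi mulr0 subrr.
have -> : forall a b : R[i], 'i * (a + b) - (- 'i * a + 'i * b) = 2 * 'i * a by move=> a b; ring.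
by move/eqP; rewrite !mulf_eq0 pnatr_eq0 (negbTE (neq0Ci _)) /= => /eqP.
Qed.

End Polarization.

Section InnerRepresentation.
Variables (R : realType) (H1 H2 K : hspace R) (S : H1 -> H2) (P : H1 -> K) (Q : H2 -> K).
Hypothesis SPQ : forall y w, inner (S y) w = inner (P y) (Q w).
Variable c : R.
Hypotheses (c0 : 0 <= c) (Qc : forall w, hnorm (Q w) <= c * hnorm w).

Lemma hnorm_le_inner_rep y : hnorm (S y) <= c * hnorm (P y).
Proof.
have := cauchy_schwarz (P y) (Q (S y)).
rewrite -SPQ innerxx normc_real ger0_norm ?exprn_ge0 ?hnorm_ge0 //.
have := Qc (S y); have := hnorm_ge0 (S y); have := hnorm_ge0 (P y).
have := mulr_ge0 c0 (hnorm_ge0 (P y)); nra.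
Qed.

Hypothesis linP : linear P.

Lemma inner_rep_cl_ran v : cl_ran P v -> exists z, forall w, inner z w = inner v (Q w).
Proof.
have linS : linear S.
  by move=> a y y'; apply: inner_ext => w; rewrite SPQ linP !innerD !innerZ !SPQ.
case/cl_ran_seq => ys Pys.
have [z Sys] : exists z, converges_to (S \o ys) z.
  apply: cauchy_seq_converges => e e0.
  have c1 : 0 < c + 1 by rewrite ltr_wpDl.
  have [N hN] := converges_to_cauchy Pys (divr_gt0 e0 c1).
  exists N => m n Nm Nn /=; rewrite -(zmod_morphism_linear linS).
  apply: le_lt_trans (hnorm_le_inner_rep _) _; rewrite (zmod_morphism_linear linP).
  have := hN m n Nm Nn; rewrite /= ltr_pdivlMr //.
  have := hnorm_ge0 (P (ys m) - P (ys n)); nra.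
by exists z => w; apply: inner_limit Sys Pys _ => n; apply: SPQ.
Qed.

End InnerRepresentation.

Section Projection.
Variables (R : realType) (H K : hspace R) (L : H -> K).
Hypothesis linL : linear L.

Lemma min_dist_orthogonal w : (forall y, hnorm w <= hnorm (w - L y)) ->
  forall x, inner w (L x) = 0.
Proof.
move=> wmin x; set c := inner w (L x); set g := L x.
(* Compare w with w - s c g: for s = 1/(|g|^2 + 1) the gain 2 s |c|^2 beats the
   loss s^2 |c|^2 |g|^2 unless c = 0. *)
have g1 : 0 < hnorm g ^+ 2 + 1 by rewrite ltr_wpDl ?exprn_ge0 ?hnorm_ge0.
set s := (hnorm g ^+ 2 + 1)^-1.
have s0 : 0 < s by rewrite invr_gt0.
have sg : s * hnorm g ^+ 2 = 1 - s by rewrite /s; field; rewrite gt_eqF.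
have LZ : L ((s%:C * c) *: x) = (s%:C * c) *: g by apply: scalable_linear.
have := wmin ((s%:C * c) *: x); rewrite LZ.
rewrite -ler_sqr ?nnegrE ?hnorm_ge0 // sqr_hnormD hnormN hnormZ normcM normc_real.
rewrite (ger0_norm (ltW s0)) innerNr innerZr -/c rmorphM /= conj_realC.
have -> : complex.Re (- (s%:C * c^* * c)) = - (s * normc c ^+ 2).
  by rewrite -mulrA [c^* * c]mulrC -sqr_normcE /= mul0r subr0.
have -> : (s * normc c * hnorm g) ^+ 2 = s * normc c ^+ 2 * (1 - s) by rewrite -sg; ring.
have := normc_ge0 c; move=> n0 h; apply: eq0_normc; nra.
Qed.

Lemma min_seq_cauchy v (d : R) xs : 0 <= d ->
  (forall x, d <= hnorm (v - L x)) ->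
  (forall n, hnorm (v - L (xs n)) < d + n.+1%:R^-1) -> cauchy_seq (L \o xs).
Proof.
move=> d0 dmin xsmin e e0.
(* The parallelogram law gives |L (xs m) - L (xs n)|^2 <= (4d + 2)(i + j)
   for i = 1/(m+1) and j = 1/(n+1). *)
have D0 : 0 < 8 * d + 4 by lra.
have [N hN] := eventually_inv_lt (divr_gt0 (exprn_gt0 2 e0) D0).
exists N => m n Nm Nn /=.
rewrite -ltr_sqr ?nnegrE ?hnorm_ge0 ?ltW //.
have mid : d <= hnorm (v - 2^-1 *: (L (xs m) + L (xs n))).
  have := dmin (2^-1 *: (xs m + xs n)).
  by rewrite (scalable_linear linL) (GRing.semilinear_linear linL).2.
have := hnorm_parallelogram (v - L (xs m)) (v - L (xs n)).
have -> : v - L (xs m) + (v - L (xs n)) = 2%:R *: (v - 2^-1 *: (L (xs m) + L (xs n))).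
  by rewrite scalerBr scalerA divff ?pnatr_eq0 // scale1r scaler_nat mulr2n opprD addrACA.
have -> : v - L (xs m) - (v - L (xs n)) = - (L (xs m) - L (xs n)).
  by rewrite !opprB addrC addrA subrK.
rewrite hnormN hnormZ normcMn normc1.
have sqr_lt k : hnorm (v - L (xs k)) ^+ 2 <= (d + k.+1%:R^-1) ^+ 2.
  by rewrite ler_sqr ?nnegrE ?hnorm_ge0 ?addr_ge0 ?invr_ge0 // ltW.
have inv_sqr k : (k.+1%:R^-1 : R) ^+ 2 <= k.+1%:R^-1.
  by rewrite expr2 ler_piMl ?invr_ge0 // invf_le1 ?ler1n ?ltr0n.
have := hN m Nm; have := hN n Nn; rewrite !ltr_pdivlMr //.
have := sqr_lt m; have := sqr_lt n; have := inv_sqr m; have := inv_sqr n.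
have : d ^+ 2 <= hnorm (v - 2^-1 *: (L (xs m) + L (xs n))) ^+ 2.
  by rewrite ler_sqr ?nnegrE ?hnorm_ge0.
move: (hnorm (v - _ *: _)) (hnorm (L (xs m) - _)) (hnorm (v - L (xs m))) (hnorm (v - L (xs n))).
by move: (m.+1%:R^-1) (n.+1%:R^-1) => i j M X a b; lra.
Qed.

Lemma exists_min_seq v : exists d xs, [/\ 0 <= d, forall x, d <= hnorm (v - L x)
  & forall n, hnorm (v - L (xs n)) < d + n.+1%:R^-1].
Proof.
pose dists := fun r : R => exists x, r = hnorm (v - L x).
have ne : classical_sets.nonempty dists by exists (hnorm (v - L 0)), 0.
have lb0 : classical_sets.lbound dists 0 by move=> _ [x ->]; apply: hnorm_ge0.
have hinf : classical_sets.has_inf dists by split=> //; exists 0.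
have /boolp.choice [xs hxs] : forall n : nat, exists x, hnorm (v - L x) < inf dists + n.+1%:R^-1.
  move=> n; have : inf dists < inf dists + n.+1%:R^-1 by rewrite ltrDl invr_gt0 ltr0n.
  by case/(lt_inf_imfset hinf) => x; exists x.
exists (inf dists), xs; split => // [|x]; first exact: lb_le_inf.
by apply: (ge_inf hinf.2); exists x.
Qed.

End Projection.

Section ContractionOnRange.
Variables (R : realType) (H K1 K2 : hspace R) (E : H -> K1) (G : K1 -> K2).
Hypotheses (linE : linear E)
  (linG : forall a u v, cl_ran E u -> cl_ran E v -> G (a *: u + v) = a *: G u + G v).

Lemma cl_ran_linearB u v : cl_ran E u -> cl_ran E v -> G (u - v) = G u - G v.
Proof. by move=> hu hv; rewrite -scaleN1r addrC linG // scaleN1r addrC. Qed.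

Lemma comp_range_linear : linear (fun x => G (E x)).
Proof. by move=> a x y /=; rewrite linE linG. Qed.

Lemma isometric_cl_ran : (forall u, cl_ran E u -> hnorm (G u) <= hnorm u) ->
  (forall x, hnorm (G (E x)) = hnorm (E x)) ->
  forall u, cl_ran E u -> hnorm (G u) = hnorm u.
Proof.
move=> Gc GEiso u hu; apply/eqP; rewrite eq_le Gc //=; apply/ler_addgt0Pr => e e0.
have [x hx] := hu _ (divr_gt0 e0 (ltr0n _ 2)).
have := ler_hnormD (u - E x) (E x); rewrite subrK.
have := ler_hnormD (G (E x) - G u) (G u); rewrite subrK -cl_ran_linearB //.
have := Gc _ (cl_ranB linE (cl_ran_im E x) hu); rewrite hnorm_distC GEiso; lra.
Qed.

Hypothesis Giso : forall u, cl_ran E u -> hnorm (G u) = hnorm u.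

Lemma orthogonal_projection v :
  exists2 u, cl_ran E u & forall x, inner (v - G u) (G (E x)) = 0.
Proof.
have GEB x y : G (E (x - y)) = G (E x) - G (E y).
  exact: (zmod_morphism_linear comp_range_linear).
have GED x y : G (E (x + y)) = G (E x) + G (E y).
  by have := comp_range_linear 1 x y; rewrite /= !scale1r.
have [d [xs [d0 dmin xsmin]]] := exists_min_seq (fun x => G (E x)) v.
have /cauchy_seq_converges [u Exs] : cauchy_seq (E \o xs).
  move=> e /(min_seq_cauchy comp_range_linear d0 dmin xsmin) [N hN].
  exists N => m n Nm Nn; have := hN m n Nm Nn.
  by rewrite /= -GEB Giso // (zmod_morphism_linear linE).
have uE : cl_ran E u := converges_to_cl_ran Exs.
have Gdist n : hnorm (G (E (xs n)) - G u) = hnorm (E (xs n) - u).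
  by rewrite -cl_ran_linearB // Giso //; apply: cl_ranB.
have close e : 0 < e -> exists n, n.+1%:R^-1 + hnorm (E (xs n) - u) < e.
  move=> e0; have e2 := divr_gt0 e0 (ltr0n _ 2).
  have [N1 h1] := eventually_inv_lt e2; have [N2 h2] := Exs _ e2.
  exists (maxn N1 N2); have := h1 _ (leq_maxl N1 N2); have := h2 _ (leq_maxr N1 N2).
  by rewrite /=; move: (_.+1%:R^-1) (hnorm _) => i r; lra.
exists u => //; apply: (min_dist_orthogonal comp_range_linear) => y.
have wd : hnorm (v - G u) <= d.
  apply/ler_addgt0Pr => e /close [n hn].
  have := ler_hnormD (v - G (E (xs n))) (G (E (xs n)) - G u).
  rewrite addrA subrK Gdist; have := xsmin n.
  by move: hn; move: (n.+1%:R^-1) => i; lra.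
suff dw : d <= hnorm (v - G u - G (E y)) by apply: le_trans wd dw.
apply/ler_addgt0Pr => e /close [n hn].
have := dmin (xs n + y); rewrite GED.
have -> : v - (G (E (xs n)) + G (E y)) = (v - G u - G (E y)) - (G (E (xs n)) - G u).
  by rewrite opprD addrA opprB addrA (addrAC v (- G u)) subrK addrAC.
have := ler_hnormB (v - G u - G (E y)) (G (E (xs n)) - G u); rewrite Gdist.
have : (0 : R) < n.+1%:R^-1 by rewrite invr_gt0 ltr0n.
by move: hn; move: (n.+1%:R^-1) => i; lra.
Qed.

End ContractionOnRange.

Section BlockForm.
Variables (R : realType) (H : hspace R) (A B Bs : H -> H).

Definition block_form (M : H -> H) (x y : H) : R[i] :=
  inner (A x - M x + Bs y) x + inner (B x + M y) y.

Lemma block_form_sub M D x y :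
  block_form (fun z => M z - D z) x y = block_form M x y + inner (D x) x - inner (D y) y.
Proof. by rewrite /block_form !(innerD, innerN); ring. Qed.

Lemma block_form_avg M1 M2 x y :
  2 * block_form (fun z => 2^-1 *: (M1 z + M2 z)) x y =
  block_form M1 x y + block_form M2 x y.
Proof. by rewrite /block_form !(innerD, innerN, innerZ); field. Qed.

End BlockForm.

Definition block_value (R : realType) (H K1 K2 : hspace R)
    (E : H -> K1) (F : H -> K2) (G : K1 -> K2) (x y : H) : R :=
  hnorm (G (E x) + F y) ^+ 2 + (hnorm (E x) ^+ 2 - hnorm (G (E x)) ^+ 2).

Lemma linearB_fun (R : realType) (H K : hspace R) (T1 T2 : H -> K) :
  linear T1 -> linear T2 -> linear (fun x => T1 x - T2 x).
Proof. by move=> l1 l2 a x y; rewrite l1 l2 scalerBr opprD addrACA. Qed.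

Lemma bounded_linearB (R : realType) (H K : hspace R) (T1 T2 : H -> K) :
  bounded_linear T1 -> bounded_linear T2 -> bounded_linear (fun x => T1 x - T2 x).
Proof.
move=> [l1 [c1 T1c]] [l2 [c2 T2c]]; split; first exact: linearB_fun.
by exists (c1 + c2) => x; apply: le_trans (ler_hnormB _ _) _; rewrite mulrDl lerD.
Qed.

Section Factorization.
Variables (R : realType) (H K1 K2 : hspace R) (A B Bs M : H -> H).
Variables (E : H -> K1) (F : H -> K2) (G : K1 -> K2).
Hypotheses (BBs : is_adjoint B Bs) (AME : factors_as (fun x => A x - M x) E)
  (MF : factors_as M F) (BG : block_factor B E F G).

Lemma contraction_linear a u v :
  cl_ran E u -> cl_ran E v -> G (a *: u + v) = a *: G u + G v.
Proof. by case: BG => [[+ _ _] _]; apply. Qed.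

Lemma contraction_range u : cl_ran E u -> cl_ran F (G u).
Proof. by case: BG => [[_ + _] _]; apply. Qed.

Lemma contraction_le u : cl_ran E u -> hnorm (G u) <= hnorm u.
Proof. by case: BG => [[_ _ +] _]; apply. Qed.

Lemma inner_AM x y : inner (A x - M x) y = inner (E x) (E y).
Proof. by case: AME => _ [Es [EEs ->]]; rewrite (adjointC EEs). Qed.

Lemma inner_M x y : inner (M x) y = inner (F x) (F y).
Proof. by case: MF => _ [Fs [FFs ->]]; rewrite (adjointC FFs). Qed.

Lemma inner_B x y : inner (B x) y = inner (G (E x)) (F y).
Proof. by case: BG => _ [Fs [FFs ->]]; rewrite (adjointC FFs). Qed.

Lemma inner_Bs y w : inner (Bs y) w = inner (F y) (G (E w)).
Proof. by rewrite innerC -BBs inner_B -innerC. Qed.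

Lemma inner_BM x y w : inner (B x + M y) w = inner (G (E x) + F y) (F w).
Proof. by rewrite !innerD inner_B inner_M. Qed.

Lemma block_formE x y : block_form A B Bs M x y = (block_value E F G x y)%:C.
Proof.
rewrite /block_form /block_value innerD inner_AM inner_Bs innerD inner_M inner_B.
rewrite sqr_hnormD !rmorphD rmorphN /= Re_addJ -!innerxx -innerC; ring.
Qed.

Lemma block_value_ge x y : hnorm (G (E x) + F y) ^+ 2 <= block_value E F G x y.
Proof.
rewrite /block_value lerDl subr_ge0 ler_sqr ?nnegrE ?hnorm_ge0 //.
exact: contraction_le.
Qed.

Lemma normc_inner_BM_le x y w :
  normc (inner (B x + M y) w) ^+ 2 <= block_value E F G x y * hnorm (F w) ^+ 2.
Proof.
rewrite inner_BM; apply: le_trans (_ : _ <= (hnorm (G (E x) + F y) * hnorm (F w)) ^+ 2) _.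
  by rewrite ler_sqr ?nnegrE ?normc_ge0 ?mulr_ge0 ?hnorm_ge0 ?cauchy_schwarz.
by rewrite exprMn ler_wpM2r ?exprn_ge0 ?hnorm_ge0 ?block_value_ge.
Qed.

Lemma calM_sub D (q : H -> R) : bounded_linear M -> bounded_linear D ->
  (forall x, inner (D x) x = (q x)%:C) -> (forall x, q x <= hnorm (F x) ^+ 2) ->
  (forall x y, q y <= block_value E F G x y + q x) ->
  calM A B Bs (fun x => M x - D x).
Proof.
move=> Mb Db Dq qF qval; split; first split; first exact: bounded_linearB.
  by move=> x; rewrite innerB inner_M innerxx Dq -rmorphB ler0c subr_ge0.
move=> x y; change (0 <= block_form A B Bs (fun z => M z - D z) x y).
rewrite block_form_sub block_formE !Dq.
by rewrite -rmorphD -rmorphB ler0c subr_ge0 qval.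
Qed.

End Factorization.

Lemma unitary_block_value_small (R : realType) (H K1 K2 : hspace R)
    (E : H -> K1) (F : H -> K2) (G : K1 -> K2) :
  linear E -> linear F -> unitary_between E F G ->
  forall y (e : R), 0 < e -> exists x, block_value E F G x y < e ^+ 2.
Proof.
move=> linE linF [linG _ Giso Gonto] y e e0.
have FN : F (- y) = - F y by rewrite -scaleN1r (scalable_linear linF) /= scaleN1r.
have [u uE Gu] := Gonto _ (cl_ran_im F (- y)).
have [x hx] := uE _ e0; exists x.
rewrite /block_value Giso // subrr addr0 ltr_sqr ?nnegrE ?hnorm_ge0 ?ltW //.
by rewrite -[F y]opprK -FN -Gu -(cl_ran_linearB linG) ?Giso 1?hnorm_distC //; apply: cl_ranB.
Qed.

Section Sufficiency.
Variables (R : realType) (H KEp KFp KEm KFm KEs KFs : hspace R) (A B Bs Mp Mm : H -> H).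
Variables (Ep : H -> KEp) (Fp : H -> KFp) (Gp : KEp -> KFp).
Variables (Em : H -> KEm) (Fm : H -> KFm) (Gm : KEm -> KFm).
Variables (Es : H -> KEs) (Fs : H -> KFs) (Gs : KEs -> KFs).
Local Notation Mst := (fun x => 2^-1 *: (Mp x + Mm x)).
Hypotheses (BBs : is_adjoint B Bs)
  (AMEp : factors_as (fun x => A x - Mp x) Ep) (MFp : factors_as Mp Fp)
  (BGp : block_factor B Ep Fp Gp)
  (AMEm : factors_as (fun x => A x - Mm x) Em) (MFm : factors_as Mm Fm)
  (BGm : block_factor B Em Fm Gm)
  (AMEs : factors_as (fun x => A x - Mst x) Es) (MFs : factors_as Mst Fs)
  (BGs : block_factor B Es Fs Gs).

Lemma max_eq_min : unitary_between Es Fs Gs -> forall y, Mp y = Mm y.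
Proof.
move=> Us y; suff Mpm0 w : inner (Mp y - Mm y) w = 0 by apply/subr0_eq/inner_eq0.
apply: (eq0_normc_le (k := 2 * (hnorm (Fp w) + hnorm (Fm w)))) => e e0.
have [x small] := unitary_block_value_small AMEs.1.1 MFs.1.1 Us y e0.
have := block_form_avg A B Bs Mp Mm x y.
rewrite (block_formE BBs AMEs MFs BGs) (block_formE BBs AMEp MFp BGp).
rewrite (block_formE BBs AMEm MFm BGm) -rmorphD -(rmorph_nat (real_complex R) 2) -rmorphM.
move=> /complexI avg.
have bound (v a P : R) : 0 <= a -> 0 <= P -> v <= 2 * e ^+ 2 -> a ^+ 2 <= v * P ^+ 2 ->
    a <= 2 * e * P.
  move=> a0 P0 ve av; rewrite -ler_sqr ?nnegrE ?mulr_ge0 ?(ltW e0) //; apply: le_trans av _.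
  by rewrite [X in _ <= X]exprMn ler_wpM2r ?exprn_ge0 //; have := sqr_ge0 e; lra.
have vp0 := le_trans (exprn_ge0 2 (hnorm_ge0 _)) (block_value_ge BGp x y).
have vm0 := le_trans (exprn_ge0 2 (hnorm_ge0 _)) (block_value_ge BGm x y).
have -> : inner (Mp y - Mm y) w = inner (B x + Mp y) w - inner (B x + Mm y) w.
  by rewrite !(innerD, innerN); ring.
apply: le_trans (le_normcD _ _) _; rewrite normcN.
have := bound _ _ _ (normc_ge0 _) (hnorm_ge0 _) _ (normc_inner_BM_le MFp BGp x y w).
have := bound _ _ _ (normc_ge0 _) (hnorm_ge0 _) _ (normc_inner_BM_le MFm BGm x y w).
by move=> /(_ ltac:(lra)) bm /(_ ltac:(lra)) bp; lra.
Qed.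
End Sufficiency.

Lemma calM_eq_max (R : realType) (H : hspace R) (A B Bs Mp Mm : H -> H) :
  (forall M, calM A B Bs M -> op_le M Mp) -> (forall M, calM A B Bs M -> op_le Mm M) ->
  (forall y, Mp y = Mm y) -> forall M, calM A B Bs M -> M = Mp.
Proof.
move=> Mp_max Mm_min Mpm M MM; have [[linD _] Dpos] := Mp_max M MM.
have [_ Dneg] := Mm_min M MM.
apply: boolp.funext => x; apply/esym/subr0_eq; apply: (quadratic_form_eq0 linD) => {}x.
apply/eqP; rewrite eq_le Dpos andbT -oppr_ge0 -innerN opprB.
by have := Dneg x; rewrite Mpm.
Qed.

Section Necessity.
Variables (R : realType) (H K1 K2 : hspace R) (A B Bs M0 : H -> H).
Variables (E : H -> K1) (F : H -> K2) (G : K1 -> K2).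
Hypotheses (Ab : bounded_linear A) (BBs : is_adjoint B Bs)
  (AME : factors_as (fun x => A x - M0 x) E) (MF : factors_as M0 F)
  (BG : block_factor B E F G) (M0b : bounded_linear M0)
  (M0_unique : forall M, calM A B Bs M -> M = M0).

Let linE : linear E := AME.1.1.
Let linF : linear F := MF.1.1.
Let linG := contraction_linear BG.

Lemma perturbation_eq0 D (q : H -> R) : bounded_linear D ->
  (forall x, inner (D x) x = (q x)%:C) -> (forall x, q x <= hnorm (F x) ^+ 2) ->
  (forall x y, q y <= block_value E F G x y + q x) -> forall x, D x = 0.
Proof.
move=> Db Dq qF qval x.
have /(congr1 (@^~ x)) /= M0D := M0_unique (calM_sub BBs AME MF BG M0b Db Dq qF qval).
by apply: oppr_inj; apply: (addrI (M0 x)); rewrite M0D oppr0 addr0.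
Qed.

Lemma singleton_isometric_on_ran x : hnorm (G (E x)) = hnorm (E x).
Proof.
have [c c0 Ec] := bounded_linear_bound AME.1.
have GEc w : hnorm (G (E w)) <= c * hnorm w.
  exact: le_trans (contraction_le BG (cl_ran_im E w)) (Ec w).
(* T = E^*G^*GE: B^* = E^*G^*F on ran F extends continuously to its closure. *)
have /boolp.choice [T Trep] :
    forall x, exists z, forall w, inner z w = inner (G (E x)) (G (E w)).
  move=> x0; apply: (inner_rep_cl_ran (inner_Bs BBs BG) c0 GEc linF).
  exact (contraction_range BG (cl_ran_im E x0)).
have linGE := comp_range_linear linE linG.
have linT : linear T.
  by move=> a y y'; apply: inner_ext => w; rewrite Trep linGE !innerD !innerZ !Trep.
have Tb : bounded_linear T.
  split=> //; exists (c * c) => y; rewrite -mulrA.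
  by apply: le_trans (hnorm_le_inner_rep Trep c0 GEc y) _; rewrite ler_wpM2l.
pose D z := T z - (A z - M0 z).
have DE z : inner (D z) z = (hnorm (G (E z)) ^+ 2 - hnorm (E z) ^+ 2)%:C.
  by rewrite innerB Trep (inner_AM AME) !innerxx -rmorphB.
have qle0 z : hnorm (G (E z)) ^+ 2 - hnorm (E z) ^+ 2 <= 0.
  by rewrite subr_le0 ler_sqr ?nnegrE ?hnorm_ge0 ?(contraction_le BG).
have Db : bounded_linear D := bounded_linearB Tb (bounded_linearB Ab M0b).
have qF z : hnorm (G (E z)) ^+ 2 - hnorm (E z) ^+ 2 <= hnorm (F z) ^+ 2.
  exact: le_trans (qle0 z) (sqr_ge0 _).
have qval x1 y : hnorm (G (E y)) ^+ 2 - hnorm (E y) ^+ 2 <=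
    block_value E F G x1 y + (hnorm (G (E x1)) ^+ 2 - hnorm (E x1) ^+ 2).
  by rewrite /block_value; have := qle0 y; have := sqr_ge0 (hnorm (G (E x1) + F y)); lra.
have := DE x; rewrite (perturbation_eq0 Db DE qF qval x) inner0 -(rmorph0 (real_complex R)).
by move=> /complexI /esym /eqP; rewrite subr_eq0 eqrXn2 ?hnorm_ge0 // => /eqP.
Qed.

Lemma singleton_isometric u : cl_ran E u -> hnorm (G u) = hnorm u.
Proof. exact: (isometric_cl_ran linE linG (contraction_le BG) singleton_isometric_on_ran). Qed.

Lemma cl_ran_perp_eq0 w :
  cl_ran F w -> (forall x, inner (G (E x)) w = 0) -> w = 0.
Proof.
move=> wF orth; have [//|w_neq0] := eqVneq w 0.
have w2 : 0 < hnorm w ^+ 2.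
  by rewrite exprn_gt0 // lt_def hnorm_ge0 andbT; apply: contra_neq w_neq0 => /hnorm_eq0.
set k := (hnorm w ^+ 2)^-1; have k0 : 0 < k by rewrite invr_gt0.
have [Fs [FFs _]] := MF.2; have [cF cF0 Fc] := bounded_linear_bound MF.1.
have kCS v : k * normc (inner v w) ^+ 2 <= hnorm v ^+ 2.
  rewrite mulrC ler_pdivrMr // -exprMn ler_sqr ?nnegrE ?normc_ge0 ?mulr_ge0 ?hnorm_ge0 //.
  exact: cauchy_schwarz.
pose D z := (k%:C * inner (F z) w) *: Fs w.
have Db : bounded_linear D.
  split=> [a y y'|]; first by rewrite /D linF innerD innerZ mulrDr scalerDl mulrCA scalerA.
  exists (k * cF * hnorm w * hnorm (Fs w)) => z.
  rewrite /D hnormZ normcM normc_real (ger0_norm (ltW k0)) -!mulrA ler_pM2l //.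
  have := le_trans (cauchy_schwarz (F z) w) (ler_wpM2r (hnorm_ge0 w) (Fc z)).
  have := hnorm_ge0 (Fs w); have := hnorm_ge0 z; have := hnorm_ge0 w; nra.
have DE z : inner (D z) z = (k * normc (inner (F z) w) ^+ 2)%:C.
  by rewrite /D innerZ (adjointC FFs) (innerC w) rmorphM /= sqr_normcE mulrA.
have qval x y : k * normc (inner (F y) w) ^+ 2 <=
    block_value E F G x y + k * normc (inner (F x) w) ^+ 2.
  have -> : inner (F y) w = inner (G (E x) + F y) w by rewrite innerD orth add0r.
  apply: le_trans (kCS _) _; apply: le_trans (block_value_ge BG x y) _.
  by rewrite lerDl mulr_ge0 ?exprn_ge0 ?normc_ge0 ?(ltW k0).
have Fsw0 : Fs w = 0.
  have := perturbation_eq0 Db DE (fun z => kCS (F z)) qval (Fs w).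
  rewrite /D FFs innerxx => /eqP; rewrite scaler_eq0 => /orP [|/eqP //].
  rewrite -rmorphM -(rmorph0 (real_complex R)) (inj_eq (@complexI R)) mulf_eq0 gt_eqF //=.
  by rewrite sqrf_eq0 => /eqP /hnorm_eq0.
by apply: (cl_ran_orthogonal wF) => y; rewrite FFs Fsw0 inner0r.
Qed.

Lemma singleton_onto w0 : cl_ran F w0 -> exists2 u, cl_ran E u & G u = w0.
Proof.
move=> w0F; have [u uE orth] := orthogonal_projection linE linG singleton_isometric w0.
exists u => //; apply/esym/subr0_eq/cl_ran_perp_eq0 => [|x].
  exact: cl_ranB linF w0F (contraction_range BG uE).
by rewrite innerC orth rmorph0.
Qed.

Lemma singleton_unitary : unitary_between E F G.
Proof.
split; [exact: linG | exact: contraction_range BG | exact: singleton_isometric |].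
exact: singleton_onto.
Qed.

End Necessity.

Theorem lemma4p2 (R : realType) (H : hspace R) (A B Bs : H -> H)
  (KEp KFp KEm KFm KEs KFs : hspace R)
  (Mp Mm : H -> H)
  (Ep : H -> KEp) (Fp : H -> KFp) (Gp : KEp -> KFp)
  (Em : H -> KEm) (Fm : H -> KFm) (Gm : KEm -> KFm)
  (Es : H -> KEs) (Fs : H -> KFs) (Gs : KEs -> KFs) :
  bounded_linear A -> selfadjoint A ->
  bounded_linear B -> is_adjoint B Bs ->
  calM A B Bs Mp -> (forall M, calM A B Bs M -> op_le M Mp) ->
  calM A B Bs Mm -> (forall M, calM A B Bs M -> op_le Mm M) ->
  let Mst := fun x => 2^-1 *: (Mp x + Mm x) in
  factors_as (fun x => A x - Mp x) Ep ->
  factors_as (fun x => A x - Mm x) Em ->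
  factors_as (fun x => A x - Mst x) Es ->
  factors_as Mp Fp -> factors_as Mm Fm -> factors_as Mst Fs ->
  block_factor B Ep Fp Gp -> block_factor B Em Fm Gm ->
  block_factor B Es Fs Gs ->
  ((exists M0 : H -> H, forall M, calM A B Bs M <-> M = M0) <->
   [/\ unitary_between Ep Fp Gp, unitary_between Em Fm Gm
     & unitary_between Es Fs Gs]).
Proof.
move=> Ab _ _ BBs Mp_cal Mp_max Mm_cal Mm_min Mst AMEp AMEm AMEs MFp MFm MFs BGp BGm BGs.
split=> [[M0 M0_cal] | [_ _ Us]].
  have M0_unique M : calM A B Bs M -> M = M0 by move/M0_cal.
  have Mp0 : Mp = M0 by apply/M0_cal.
  have Mm0 : Mm = M0 by apply/M0_cal.
  have Mst0 : Mst = M0.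
    apply: boolp.funext => x; rewrite /Mst Mp0 Mm0 -mulr2n -[M0 x *+ 2]scaler_nat scalerA.
    by rewrite mulVf ?pnatr_eq0 // scale1r.
  have M0b : bounded_linear M0 by rewrite -Mp0; case: Mp_cal => -[].
  rewrite Mp0 in AMEp MFp; rewrite Mm0 in AMEm MFm; rewrite Mst0 in AMEs MFs.
  by split; apply: singleton_unitary Ab BBs _ _ _ M0b M0_unique.
have Mpm := max_eq_min BBs AMEp MFp BGp AMEm MFm BGm AMEs MFs BGs Us.
exists Mp => M; split=> [|->//]; exact: calM_eq_max Mp_max Mm_min Mpm M.
Qed.
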